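(* Let $R$ be a ring with unity and involution $*$, and let $a\in R$ be Moore-Penrose invertible with Moore-Penrose inverse $a^{\dagger}$. Then there exist $a_1,a_2\in R$ with $aa^*=a_1+a_2$ such that (1) $a_1$ is left dual core invertible, (2) $a_2^2=0$, (3) $a_2^*a_1=0=a_1a_2$. In addition, $a^*a$ is left dual core invertible and $a^{\dagger}(a^{\dagger})^*$ is a left dual core inverse of $a^*a$.
   Context: The Moore-Penrose inverse $a^\dagger$ is the unique $x\in R$ with $axa=a$, $xax=x$, $(ax)^*=ax$, $(xa)^*=xa$. An element $y$ is left dual core invertible if there exists $z\in R$ with $yzy=y$, $(zy)^*=zy$ and $z^2y=z$; such $z$ is a left dual core inverse of $y$. *)

From mathcomp Require Import all_boot all_algebra.
Set Implicit Arguments. Unset Strict Implicit. Unset Printing Implicit Defensive.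
Import GRing.Theory.
Local Open Scope ring_scope.

Definition is_involution (R : pzRingType) (st : R -> R) : Prop :=
  (forall x y, st (x + y) = st x + st y) /\
  (forall x y, st (x * y) = st y * st x) /\
  (forall x, st (st x) = x).

Definition is_MP_inverse (R : pzRingType) (st : R -> R) (a x : R) : Prop :=
  [/\ a * x * a = a, x * a * x = x, st (a * x) = a * x & st (x * a) = x * a].

Definition MP_invertible (R : pzRingType) (st : R -> R) (a : R) : Prop :=
  exists x, is_MP_inverse st a x.

Definition is_left_dual_core_inverse (R : pzRingType) (st : R -> R) (y z : R) : Prop :=
  [/\ y * z * y = y, st (z * y) = z * y & z ^+ 2 * y = z].

Definition left_dual_core_invertible (R : pzRingType) (st : R -> R) (y : R) : Prop :=
  exists z, is_left_dual_core_inverse st y z.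

From mathcomp Require Import all_boot all_algebra.
Set Implicit Arguments. Unset Strict Implicit. Unset Printing Implicit Defensive.
Import GRing.Theory.
Local Open Scope ring_scope.

(* If [x] is the Moore-Penrose inverse of [a], then [x x^*] is a left dual
   core inverse of [a^* a]: the key identity is [x x^* a^* = x (a x)^* = x a x = x].
   Since [x^*] is the Moore-Penrose inverse of [a^*], the same argument applied
   to [a^*] shows that [a a^*] is left dual core invertible, so the decomposition
   [a a^* = a a^* + 0] has the required properties. *)

Section Involution.

Variables (R : pzRingType) (st : R -> R).
Hypothesis hst : is_involution st.

Lemma involution0 : st 0 = 0.
Proof.
case: hst => sD _; apply: (addrI (st 0)).
by rewrite -sD !addr0.
Qed.

Variables (a x : R).
Hypothesis hx : is_MP_inverse st a x.

Lemma MP_inverse_involution : is_MP_inverse st (st a) (st x).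
Proof.
case: hst => _ [sM sK]; case: hx => A B C D.
split; first by rewrite -sM -sM mulrA A.
- by rewrite -sM -sM mulrA B.
- by rewrite -sM sK D.
- by rewrite -sM sK C.
Qed.

Lemma MP_mul_adjoint_adjoint : x * st x * st a = x.
Proof. by case: hst => _ [sM _]; case: hx => _ B C _; rewrite -mulrA -sM C mulrA B. Qed.

Lemma adjoint_MP_mul : st x * x * a = st x.
Proof. by case: hst => _ [sM _]; case: hx => _ B _ D; rewrite -mulrA -D -sM B. Qed.

Lemma left_dual_core_inverse_adjoint_mul :
  is_left_dual_core_inverse st (st a * a) (x * st x).
Proof.
have xstx_sta_a : x * st x * (st a * a) = x * a.
  by rewrite mulrA MP_mul_adjoint_adjoint.
case: hx => A _ _ D; split.
- by rewrite -mulrA xstx_sta_a -mulrA (mulrA a x a) A.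
- by rewrite xstx_sta_a.
- by rewrite expr2 -mulrA xstx_sta_a -mulrA (mulrA (st x)) adjoint_MP_mul.
Qed.

End Involution.

Theorem corollary3p15 (R : pzRingType) (st : R -> R) (a ad : R)
  (hst : is_involution st) (had : is_MP_inverse st a ad) :
  (exists a1 a2 : R,
     [/\ a * st a = a1 + a2,
         left_dual_core_invertible st a1,
         a2 ^+ 2 = 0,
         st a2 * a1 = 0 & a1 * a2 = 0]) /\
  is_left_dual_core_inverse st (st a * a) (ad * st ad).
Proof.
split; last exact: left_dual_core_inverse_adjoint_mul.
exists (a * st a), 0; split.
- by rewrite addr0.
- exists (st ad * ad).
  have [_ [_ sK]] := hst.
  have := left_dual_core_inverse_adjoint_mul hst (MP_inverse_involution hst had).
  by rewrite !sK.
- by rewrite expr2 mulr0.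
- by rewrite involution0 // mul0r.
- by rewrite mulr0.
Qed.
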